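(* Let $\mathcal{D}=\mathcal{P}_{\mathcal{D}}\cup\mathcal{L}_{\mathcal{D}}$ be a non-primal dominating set of the incidence graph of an arbitrary projective plane $\Pi_q$ of order $q$. Let $k$ be the maximum number of points of $\mathcal{P}_{\mathcal{D}}$ on a line, and $c$ the maximum number of lines of $\mathcal{L}_{\mathcal{D}}$ through a point. If $|\mathcal{D}|+|\mathcal{P}_{\mathcal{D}}|\leq 4q-3$, then $k\leq|\mathcal{P}_{\mathcal{D}}|-q+1$. If $|\mathcal{D}|+|\mathcal{L}_{\mathcal{D}}|\leq 4q-3$, then $c\leq|\mathcal{L}_{\mathcal{D}}|-q+1$. Both conclusions hold if $|\mathcal{D}|\leq(5q-3)/2$.
   Context: A dominating set $\mathcal{D}=\mathcal{P}_{\mathcal{D}}\cup\mathcal{L}_{\mathcal{D}}$ of the incidence graph of $\Pi_q$ is a set of points and lines such that every point not in $\mathcal{P}_{\mathcal{D}}$ lies on a line of $\mathcal{L}_{\mathcal{D}}$ and every line not in $\mathcal{L}_{\mathcal{D}}$ contains a point of $\mathcal{P}_{\mathcal{D}}$. $\mathcal{D}$ is primal if it contains $q$ concurrent lines or $q$ collinear points; non-primal otherwise. *)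

From mathcomp Require Import all_boot.
Set Implicit Arguments. Unset Strict Implicit. Unset Printing Implicit Defensive.

Definition projective_plane (P L : finType) (inc : P -> L -> bool) (q : nat) : Prop :=
  [/\ 2 <= q,
      forall p1 p2 : P, p1 != p2 -> #|[set l : L | inc p1 l && inc p2 l]| = 1,
      forall l1 l2 : L, l1 != l2 -> #|[set p : P | inc p l1 && inc p l2]| = 1,
      exists (a b c d : P), [/\ uniq [:: a; b; c; d] &
          forall l : L, #|[set x in [:: a; b; c; d] | inc x l]| <= 2]
    &
      forall l : L, #|[set p : P | inc p l]| = q.+1].

(* D = PD ∪ LD dominates the incidence graph. *)
Definition dominating (P L : finType) (inc : P -> L -> bool)
    (PD : {set P}) (LD : {set L}) : Prop :=
  (forall p : P, p \notin PD -> exists2 l, l \in LD & inc p l) /\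
  (forall l : L, l \notin LD -> exists2 p, p \in PD & inc p l).

Definition primal (P L : finType) (inc : P -> L -> bool) (q : nat)
    (PD : {set P}) (LD : {set L}) : Prop :=
  (exists p : P, q <= #|[set l in LD | inc p l]|) \/
  (exists l : L, q <= #|[set p in PD | inc p l]|).

Definition max_pts_on_line (P L : finType) (inc : P -> L -> bool) (PD : {set P}) : nat :=
  \max_(l : L) #|[set p in PD | inc p l]|.

Definition max_lines_through_pt (P L : finType) (inc : P -> L -> bool) (LD : {set L}) : nat :=
  \max_(p : P) #|[set l in LD | inc p l]|.

From mathcomp Require Import all_boot zify.
Set Implicit Arguments. Unset Strict Implicit. Unset Printing Implicit Defensive.

(* Fix a line l carrying k < q points of PD, with a points of PD off l, and
   suppose a <= q - 2.  Each of the q + 1 - k points of l outside PD lies on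
   q further lines, at most a of which can be dominated by PD, so at least
   q - a of them are in LD; as two lines meet once, |LD| >= (q+1-k)(q-a).
   Moreover the q^2 - a points off l outside PD are covered by lines of LD,
   each with at most q points off l, so q^2 <= a + q |LD| and |LD| >= q.  With x = q+1-k >= 2 and
   y = q-a >= 2 either size hypothesis then forces x y + 5 <= 2x + 2y, which
   contradicts (x-2)(y-2) >= 0.  The bound on c is the dual statement. *)

Lemma double_count_leq (T U : finType) (A : {set T}) (B : {set U})
    (R : T -> U -> bool) n m :
  (forall t, t \in A -> n <= #|[set u in B | R t u]|) ->
  (forall u, u \in B -> #|[set t in A | R t u]| <= m) ->
  #|A| * n <= #|B| * m.
Proof.
move=> lbA ubB.
have card_sum (V : finType) (C : {set V}) (Q : pred V) :
    #|[set v in C | Q v]| = \sum_(v in C) Q v.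
  rewrite -sum1_card big_mkcond [RHS]big_mkcond /=.
  by apply: eq_bigr => v _; rewrite !inE; case: (v \in C); case: (Q v).
rewrite -!sum_nat_const.
apply: (@leq_trans (\sum_(t in A) #|[set u in B | R t u]|)); first exact: leq_sum.
under eq_bigr do rewrite card_sum.
rewrite exchange_big /=; apply: leq_sum => u uB.
by rewrite -card_sum; apply: ubB.
Qed.

Lemma addn_double_leq_mul x y : 2 <= x -> 2 <= y -> 2 * x + 2 * y <= x * y + 4.
Proof.
move=> x2 y2; have [u ->] : exists u, x = u + 2 by exists (x - 2); lia.
have [v ->] : exists v, y = v + 2 by exists (y - 2); lia.
nia.
Qed.

(* Self-dual axioms for a projective plane of order q, so that every lemma
   about points and lines also holds with their roles exchanged. *)
Record plane_of_order (P L : finType) (inc : P -> L -> bool) (q : nat) : Prop :=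
  PlaneOfOrder {
    order_ge2 : 2 <= q;
    join_uniq : forall p1 p2 l1 l2, p1 != p2 -> l1 != l2 ->
      inc p1 l1 -> inc p2 l1 -> inc p1 l2 -> inc p2 l2 -> False;
    join_ex : forall p1 p2, p1 != p2 -> exists l, inc p1 l && inc p2 l;
    meet_ex : forall l1 l2, l1 != l2 -> exists p, inc p l1 && inc p l2;
    card_line : forall l, #|[set p | inc p l]| = q.+1;
    card_pencil : forall p, #|[set l | inc p l]| = q.+1 }.

Lemma plane_of_order_dual (P L : finType) (inc : P -> L -> bool) q :
  plane_of_order inc q -> plane_of_order (fun l p => inc p l) q.
Proof.
case=> q2 uniq join meet line pencil; split=> // l1 l2 p1 p2 *.
exact: (uniq p1 p2 l1 l2).
Qed.

Lemma card_common_lines_le1 (P L : finType) (inc : P -> L -> bool) q p1 p2 :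
  plane_of_order inc q -> p1 != p2 -> #|[set l | inc p1 l && inc p2 l]| <= 1.
Proof.
move=> plane p12; rewrite leqNgt; apply/card_gt1P => -[l1 [l2 []]].
rewrite !inE => /andP[p1l1 p2l1] /andP[p1l2 p2l2] l12.
exact: (join_uniq plane p12 l12 p1l1 p2l1 p1l2 p2l2).
Qed.

Lemma card_common_points_le1 (P L : finType) (inc : P -> L -> bool) q l1 l2 :
  plane_of_order inc q -> l1 != l2 -> #|[set p | inc p l1 && inc p l2]| <= 1.
Proof. by move/plane_of_order_dual; apply: card_common_lines_le1. Qed.

Lemma card_set_eq1_exists (T : finType) (Q : pred T) :
  #|[set x | Q x]| = 1 -> exists x, Q x.
Proof.
move=> e; have : 0 < #|[set x | Q x]| by rewrite e.
by case/card_gt0P => x; rewrite inE; exists x.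
Qed.

Lemma card_pencil_leq_line (P L : finType) (inc : P -> L -> bool) p m :
  (forall p1 p2 : P, p1 != p2 -> #|[set l | inc p1 l && inc p2 l]| = 1) ->
  (forall l1 l2 : L, l1 != l2 -> #|[set r | inc r l1 && inc r l2]| = 1) ->
  ~~ inc p m -> #|[set l | inc p l]| <= #|[set r | inc r m]|.
Proof.
move=> join meet pNm; rewrite -[X in X <= _]muln1 -[X in _ <= X]muln1.
apply: (@double_count_leq _ _ _ _ (fun l r => inc r l)) => [l | r].
- rewrite inE => pl; have lm : l != m by apply: contraNneq pNm => <-.
  have [r /andP[rl rm]] := card_set_eq1_exists (meet l m lm).
  by apply/card_gt0P; exists r; rewrite !inE rm rl.
- rewrite inE => rm; have pr : p != r by apply: contraNneq pNm => ->.
  rewrite -(join p r pr); apply: subset_leq_card.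
  by apply/subsetP => l; rewrite !inE => /andP[-> ->].
Qed.

Section FromProjectivePlane.

Variables (P L : finType) (inc : P -> L -> bool) (q : nat).
Hypothesis plane : projective_plane inc q.

Lemma projective_plane_join_ex p1 p2 : p1 != p2 -> exists l, inc p1 l && inc p2 l.
Proof. move=> p12; case: plane => _ join _ _ _; exact: card_set_eq1_exists (join p1 p2 p12). Qed.

Lemma projective_plane_join_uniq p1 p2 l1 l2 : p1 != p2 -> l1 != l2 ->
  inc p1 l1 -> inc p2 l1 -> inc p1 l2 -> inc p2 l2 -> False.
Proof.
case: plane => _ join _ _ _ /join e l12 p1l1 p2l1 p1l2 p2l2.
have := e; apply/eqP; rewrite gtn_eqF //; apply/card_gt1P.
by exists l1, l2; rewrite !inE p1l1 p2l1 p1l2 p2l2 l12.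
Qed.

Lemma projective_plane_nonempty : 0 < #|P| /\ 0 < #|L|.
Proof.
case: plane => _ _ _ [a [b [c [d [uq _]]]]] _.
have ab : a != b by move: uq; rewrite /= !inE !negb_or => /andP[/and3P[]].
have [l _] := projective_plane_join_ex ab.
by split; apply/card_gt0P; [exists a | exists l].
Qed.

Lemma exists_line_avoiding p : exists m, ~~ inc p m.
Proof.
case: plane => _ _ _ [a [b [c [d [/= uq quad]]]]] _.
move: uq; rewrite !inE !negb_or => /and4P[/and3P[ab ac ad] /andP[bc bd] cd _].
have not_collinear x y z m : x \in [:: a; b; c; d] -> y \in [:: a; b; c; d] ->
    z \in [:: a; b; c; d] -> [&& x != y, x != z & y != z] ->
    inc x m -> inc y m -> inc z m -> False.
  move=> xQ yQ zQ /and3P[xy xz yz] xm ym zm; have := quad m; apply/negP.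
  rewrite -ltnNge; apply: leq_trans (subset_leq_card (_ : x |: (y |: [set z]) \subset _)).
    by rewrite !cardsU1 cards1 !inE negb_or xy xz yz.
  apply/subsetP => t; rewrite !in_setU1 in_set1 => /or3P[] /eqP->;
  by rewrite inE ?xQ ?yQ ?zQ ?xm ?ym ?zm.
have [mab /andP[am bm]] := projective_plane_join_ex ab.
have [mcd /andP[cm dm]] := projective_plane_join_ex cd.
have [mac /andP[am' cm']] := projective_plane_join_ex ac.
case: (boolP (inc p mab)) => [pab|]; last by exists mab.
case: (boolP (inc p mcd)) => [pcd|]; last by exists mcd.
case: (boolP (inc p mac)) => [pac|]; last by exists mac.
exfalso; have [pa | pa] := eqVneq p a.
  by subst p; apply: (not_collinear a c d mcd); rewrite ?inE ?eqxx ?orbT ?ac ?ad.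
have [e | ne] := eqVneq mab mac; last exact: (projective_plane_join_uniq pa ne).
by subst mac; apply: (not_collinear a b c mab); rewrite ?inE ?eqxx ?orbT ?ab ?ac ?bc.
Qed.

Lemma projective_plane_of_order : plane_of_order inc q.
Proof.
have [q2 join meet _ line] := plane.
split=> //; [exact: projective_plane_join_uniq | exact: projective_plane_join_ex | |].
- by move=> l1 l2 l12; apply: card_set_eq1_exists (meet l1 l2 l12).
- move=> p; have [m pNm] := exists_line_avoiding p; rewrite -(line m).
  apply/eqP; rewrite eqn_leq card_pencil_leq_line //=.
  exact: (@card_pencil_leq_line _ _ (fun l r => inc r l) m p meet join pNm).
Qed.

End FromProjectivePlane.

Section LineBound.

Variables (P L : finType) (inc : P -> L -> bool) (q : nat).
Variables (PD : {set P}) (LD : {set L}).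
Hypothesis plane : plane_of_order inc q.
Hypothesis cover_points : forall p, p \notin PD -> exists2 l, l \in LD & inc p l.
Hypothesis cover_lines : forall l, l \notin LD -> exists2 p, p \in PD & inc p l.

Variable l : L.
Let k := #|[set p in PD | inc p l]|.
Let a := #|[set p in PD | ~~ inc p l]|.

Lemma card_PD_split : #|PD| = k + a.
Proof.
rewrite -(cardsID [set p | inc p l] PD).
by congr (_ + _); apply: eq_card => p; rewrite !inE andbC.
Qed.

Lemma card_pencil_setD1 p : q <= #|[set m | inc p m] :\ l|.
Proof.
have := cardsD1 l [set m | inc p m]; rewrite (card_pencil plane).
by case: (l \in _) => /=; lia.
Qed.

Lemma uncovered_point_lines p :
  inc p l -> p \notin PD -> q - a <= #|[set m in LD | inc p m & m != l]|.
Proof.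
move=> pl pNPD.
set M := [set m | inc p m] :\ l.
have LD_part : M :&: LD = [set m in LD | inc p m & m != l].
  by apply/setP => m; rewrite !inE; case: (inc p m); case: (m \in LD); case: (m == l).
have : #|M :\: LD| * 1 <= a * 1.
  apply: (@double_count_leq _ _ _ _ (fun m s => inc s m)) => [m | s].
  - rewrite !inE => /andP[mNLD /andP[ml pm]].
    have [s sPD sm] := cover_lines mNLD.
    apply/card_gt0P; exists s; rewrite !inE sPD sm andbT /=.
    apply/negP => sl; have sp : s != p by apply: contraNneq pNPD => <-.
    exact: (join_uniq plane sp ml sm pm sl pl).
  - rewrite !inE => /andP[_ sNl]; have ps : p != s by apply: contraNneq sNl => <-.
    apply: leq_trans (card_common_lines_le1 plane ps); apply: subset_leq_card.
    by apply/subsetP => m; rewrite !inE => /andP[/andP[_ /andP[_ ->]] ->].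
have := card_pencil_setD1 p; rewrite -/M -(cardsID LD M) LD_part !muln1; lia.
Qed.

Lemma card_LD_ge_product : (q.+1 - k) * (q - a) <= #|LD|.
Proof.
set U := [set p | inc p l & p \notin PD].
have card_U : #|U| = q.+1 - k.
  have := cardsID PD [set p | inc p l]; rewrite (card_line plane).
  have -> : #|[set p | inc p l] :&: PD| = k by apply: eq_card => p; rewrite !inE andbC.
  have -> : #|[set p | inc p l] :\: PD| = #|U| by apply: eq_card => p; rewrite !inE andbC.
  lia.
have : #|U| * (q - a) <= #|[set m in LD | m != l]| * 1.
  apply: (@double_count_leq _ _ _ _ inc) => [p | m].
  - rewrite inE => /andP[pl pNPD]; apply: leq_trans (uncovered_point_lines pl pNPD) _.
    by apply: subset_leq_card; apply/subsetP => m; rewrite !inE => /and3P[-> -> ->].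
  - rewrite inE => /andP[_ ml]; apply: leq_trans (card_common_points_le1 plane ml).
    by apply: subset_leq_card; apply/subsetP => p; rewrite !inE => /andP[/andP[-> _] ->].
rewrite card_U muln1 => /leq_trans; apply; apply: subset_leq_card.
by apply/subsetP => m; rewrite inE => /andP[].
Qed.

Lemma line_meets_line m : exists z, inc z m && inc z l.
Proof.
have [-> | ml] := eqVneq m l; last exact: (meet_ex plane ml).
have : 0 < #|[set p | inc p l]| by rewrite (card_line plane).
by case/card_gt0P => z; rewrite inE => zl; exists z; rewrite zl.
Qed.

Lemma card_off_line : q * q <= #|[set x | ~~ inc x l]|.
Proof.
have [p0 /andP[_ p0l]] := line_meets_line l.
apply: leq_trans (leq_mul (card_pencil_setD1 p0) (leqnn q)) _.
rewrite -[X in _ <= X]muln1.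
apply: (@double_count_leq _ _ _ _ (fun m x => inc x m)) => [m | x].
- rewrite !inE => /andP[ml p0m].
  have : #|[set x | inc x m]| <= #|p0 |: [set x in [set x | ~~ inc x l] | inc x m]|.
    apply: subset_leq_card; apply/subsetP => x; rewrite !inE => xm.
    rewrite xm andbT; have [// | xp0] := eqVneq x p0.
    by apply/negP => xl; apply: (join_uniq plane xp0 ml xm p0m xl p0l).
  by rewrite (card_line plane) cardsU1; case: (_ \notin _) => /=; lia.
- rewrite inE => xNl; have p0x : p0 != x by apply: contraNneq xNl => <-.
  apply: leq_trans (card_common_lines_le1 plane p0x); apply: subset_leq_card.
  by apply/subsetP => m; rewrite !inE => /andP[/andP[_ ->] ->].
Qed.

Lemma card_LD_ge_cover : q * q <= a + q * #|LD|.
Proof.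
apply: leq_trans card_off_line _.
set X := [set x | ~~ inc x l].
rewrite -(cardsID PD X); have -> : #|X :&: PD| = a.
  by apply: eq_card => x; rewrite !inE andbC.
rewrite leq_add2l mulnC -[X in X <= _]muln1.
apply: (@double_count_leq _ _ _ _ inc) => [x | m mLD].
- rewrite !inE => /andP[xNPD _]; have [m mLD xm] := cover_points xNPD.
  by apply/card_gt0P; exists m; rewrite !inE mLD xm.
- have [z /andP[zm zl]] := line_meets_line m.
  have : [set x in X :\: PD | inc x m] \subset [set x | inc x m] :\ z.
    apply/subsetP => x; rewrite !inE => /andP[/andP[_ xNl] xm].
    by rewrite xm andbT; apply: contraNneq xNl => ->.
  move/subset_leq_card; have := cardsD1 z [set x | inc x m].
  by rewrite (card_line plane) inE zm /=; lia.
Qed.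

Lemma card_on_line_bound :
  k < q ->
  #|PD| + #|LD| + #|PD| <= 4 * q - 3 \/ 2 * (#|PD| + #|LD|) <= 5 * q - 3 ->
  k + q <= #|PD| + 1.
Proof.
rewrite card_PD_split => kq size_hyp.
have [|small_a] := leqP (q - 1) a; first lia.
have q2 := order_ge2 plane.
have product := card_LD_ge_product; have cover := card_LD_ge_cover.
have := @addn_double_leq_mul (q.+1 - k) (q - a) (ltac:(lia)) (ltac:(lia)).
case: size_hyp => size_hyp; first by nia.
have : q <= #|LD| by nia.
nia.
Qed.

End LineBound.

Theorem proposition3 (P L : finType) (inc : P -> L -> bool) (q : nat)
  (PD : {set P}) (LD : {set L}) :
  projective_plane inc q ->
  dominating inc PD LD ->
  ~ primal inc q PD LD ->
  let k := max_pts_on_line inc PD in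
  let c := max_lines_through_pt inc LD in
  let D := #|PD| + #|LD| in
  [/\ (D + #|PD| <= 4 * q - 3 -> k + q <= #|PD| + 1),
      (D + #|LD| <= 4 * q - 3 -> c + q <= #|LD| + 1)
    & (2 * D <= 5 * q - 3 -> k + q <= #|PD| + 1 /\ c + q <= #|LD| + 1)].
Proof.
move=> pp [cover_points cover_lines] non_primal k c D.
have plane := projective_plane_of_order pp.
have [P_gt0 L_gt0] := projective_plane_nonempty pp.
have k_bound : #|PD| + #|LD| + #|PD| <= 4 * q - 3 \/
    2 * (#|PD| + #|LD|) <= 5 * q - 3 -> k + q <= #|PD| + 1.
  rewrite /k /max_pts_on_line.
  have [l ->] := eq_bigmax (fun l => #|[set p in PD | inc p l]|) L_gt0.
  apply: (card_on_line_bound plane cover_points cover_lines (l := l)).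
  by rewrite ltnNge; apply/negP => ql; apply: non_primal; right; exists l.
have c_bound : #|LD| + #|PD| + #|LD| <= 4 * q - 3 \/
    2 * (#|LD| + #|PD|) <= 5 * q - 3 -> c + q <= #|LD| + 1.
  rewrite /c /max_lines_through_pt.
  have [p ->] := eq_bigmax (fun p => #|[set l in LD | inc p l]|) P_gt0.
  apply: (card_on_line_bound (plane_of_order_dual plane) cover_lines cover_points (l := p)).
  by rewrite ltnNge; apply/negP => qp; apply: non_primal; left; exists p.
rewrite /D; split=> size_hyp.
- by apply: k_bound; left.
- by apply: c_bound; left; lia.
- by split; [apply: k_bound | apply: c_bound]; right; lia.
Qed.
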